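(* Let $k\in\hat I$ and let $\nu,\mu$ be partitions such that $\mu$ is obtained from $\nu$ by adding one box $(x,y)$ of color $i$, i.e. with $k+x-y\equiv i\pmod n$. Then $v^{(k)}(\mu)-v^{(k)}(\nu)=-\overline{\alpha}_i$, where $(\overline\alpha_i)_j=2\delta^{(n)}_{i,j}-\delta^{(n)}_{i,j+1}-\delta^{(n)}_{i,j-1}$ for $j\in\hat I$.
   Context: Fix $n\ge3$ and $\hat I=\{0,\dots,n-1\}$ (residues mod $n$). Let $\delta^{(n)}_{i,j}=1$ if $i\equiv j\pmod n$ and $0$ otherwise. For a partition $\gamma$ with conjugate $\gamma'_y=|\{x:\gamma_x\ge y\}|$: - $(x,y)\in\mathbb Z_{\ge1}^2$ is a convex corner if $\gamma'_{y+1}<\gamma'_y=x$; - $(x,y)$ is a concave corner if $\gamma'_y=x-1$ and either $y=1$ or $\gamma'_{y-1}>x-1$. For $k,i\in\hat I$, $CC_i^{(k)}(\gamma)$ (resp. $CV_i^{(k)}(\gamma)$) is the set of concave (resp. convex) corners with $k+x-y\equiv i$. Set $v^{(k)}(\gamma)_i=|CC_i^{(k)}(\gamma)|-|CV_i^{(k)}(\gamma)|$, so $v^{(k)}(\gamma)\in\mathbb Z^n$. Boxes of $\gamma$ are the pairs $(x,y)$ with $\gamma_x\ge y$. *)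

From mathcomp Require Import all_boot all_order all_algebra.
Set Implicit Arguments. Unset Strict Implicit. Unset Printing Implicit Defensive.
Import Order.TTheory GRing.Theory Num.Theory.

Definition is_partition (g : seq nat) : bool :=
  sorted geq g && all (fun p => 0 < p) g.

Definition part (g : seq nat) (x : nat) : nat := nth 0 g x.-1.

Definition conjp (g : seq nat) (y : nat) : nat := count (fun p => y <= p) g.

Definition is_box (g : seq nat) (x y : nat) : bool :=
  [&& 0 < x, 0 < y & y <= part g x].

Definition is_convex (g : seq nat) (x y : nat) : bool :=
  [&& 0 < x, 0 < y, conjp g y.+1 < conjp g y & conjp g y == x].

Definition is_concave (g : seq nat) (x y : nat) : bool :=
  [&& 0 < x, 0 < y, conjp g y == x.-1 & (y == 1) || (conjp g y.-1 > x.-1)].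

Definition has_color (n : nat) (k : nat) (i : nat) (x y : nat) : bool :=
  (((k%:Z + x%:Z - y%:Z) %% n%:Z)%Z == (i%:Z %% n%:Z)%Z).

(* Search range: every concave/convex corner (x,y) satisfies
   1 <= x, y <= |gamma| + 1, so enumerating this square is exhaustive. *)
Definition corner_range (g : seq nat) : seq (nat * nat) :=
  [seq (x, y) | x <- iota 1 (sumn g).+1, y <- iota 1 (sumn g).+1].

Definition nCC (n k i : nat) (g : seq nat) : nat :=
  count (fun p => is_concave g p.1 p.2 && has_color n k i p.1 p.2) (corner_range g).

Definition nCV (n k i : nat) (g : seq nat) : nat :=
  count (fun p => is_convex g p.1 p.2 && has_color n k i p.1 p.2) (corner_range g).

Definition vk (n k : nat) (g : seq nat) (i : nat) : int :=
  (nCC n k i g)%:Z - (nCV n k i g)%:Z.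

Definition deltan (n : nat) (a b : int) : int :=
  if ((a %% n%:Z)%Z == (b %% n%:Z)%Z) then 1 else 0.

Definition alphabar (n : nat) (i j : int) : int :=
  2 * deltan n i j - deltan n i (j + 1) - deltan n i (j - 1).

From mathcomp Require Import all_boot all_order all_algebra.
From mathcomp Require Import ring zify.
Set Implicit Arguments. Unset Strict Implicit. Unset Printing Implicit Defensive.
Import Order.TTheory GRing.Theory Num.Theory.

(* Each column y of a partition g carries at most one concave corner, in row
   g'_y + 1, and at most one convex corner, in row g'_y, so v^(k)(g) is a sum
   of contributions of columns.  Adding the box (x, y) raises g'_y from x - 1
   to x and leaves the other columns unchanged, so only the columns y - 1, y
   and y + 1 contribute differently.  There the concave corner (x, y) of color
   i becomes a convex corner of color i.  A concave corner of color i + 1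
   appears at (x + 1, y), unless column y - 1 also ends in row x, in which case
   the convex corner (x, y - 1) of that color disappears instead.
   Symmetrically the convex corner (x - 1, y) of color i - 1 disappears, unless
   column y + 1 also ends in row x - 1, in which case a concave corner
   (x, y + 1) of that color appears instead.  Hence v changes by -2 at i and
   by +1 at i - 1 and i + 1. *)

Lemma leq_nth_count (g : seq nat) b i : sorted geq g -> 0 < b ->
  (b <= nth 0 g i) = (i < count (fun p => b <= p) g).
Proof.
elim: g i => [|p s IH] i; first by rewrite nth_nil; case: b.
have geq_trans : transitive geq by move=> ? ? ? le1 le2; apply: leq_trans le2 le1.
rewrite /= (path_sortedE geq_trans) => /andP[/allP s_le_p s_sorted] b_gt0.
have [b_le_p | p_lt_b] := leqP b p; first by case: i => //= i; rewrite IH.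
have -> : count (fun p => b <= p) s = 0.
  rewrite (eq_in_count (a2 := pred0)) ?count_pred0 // => q /s_le_p /= q_le_p.
  by apply/negbTE; rewrite -ltnNge (leq_ltn_trans q_le_p p_lt_b).
apply/negbTE; rewrite -ltnNge (leq_ltn_trans _ p_lt_b) //.
case: i => //= i; have [i_lt | i_ge] := ltnP i (size s).
  exact/s_le_p/mem_nth.
by rewrite nth_default.
Qed.

Lemma is_box_conjp g x y : is_partition g -> 0 < x -> 0 < y ->
  is_box g x y = (x <= conjp g y).
Proof.
move=> /andP[g_sorted _] x_gt0 y_gt0.
by rewrite /is_box x_gt0 y_gt0 /part leq_nth_count // prednK.
Qed.

Lemma leq_conjp g b1 b2 : b1 <= b2 -> conjp g b2 <= conjp g b1.
Proof. by move=> le_b12; apply: sub_count => q /= /(leq_trans le_b12). Qed.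

Lemma conjp_mul_leq_sumn g b : b * conjp g b <= sumn g.
Proof.
rewrite /conjp; elim: g => [|p s IH] /=; first by rewrite muln0.
by case: leqP => /= le_or_gt; nia.
Qed.

Lemma conjp_leq_sumn g b : 0 < b -> conjp g b <= sumn g.
Proof. by move=> b_gt0; rewrite (leq_trans _ (conjp_mul_leq_sumn g b)) ?leq_pmull. Qed.

Lemma conjp_eq0 g b : sumn g < b -> conjp g b = 0.
Proof. by move=> lt_sumn_b; have := conjp_mul_leq_sumn g b; nia. Qed.

Lemma eq_leq_pos (u v : nat) : (forall a, 0 < a -> (a <= u) = (a <= v)) -> u = v.
Proof.
move=> leq_uv; apply/eqP; rewrite eqn_leq; apply/andP; split.
  by case: u leq_uv => [|u] leq_uv //; rewrite -(leq_uv u.+1).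
by case: v leq_uv => [|v] leq_uv //; rewrite (leq_uv v.+1).
Qed.

Lemma conjp_add_box nu mu x y : is_partition nu -> is_partition mu ->
  0 < x -> 0 < y -> ~~ is_box nu x y ->
  (forall a b, is_box mu a b = is_box nu a b || (a == x) && (b == y)) ->
  [/\ conjp nu y = x.-1, conjp mu y = x &
      forall b, 0 < b -> b != y -> conjp mu b = conjp nu b].
Proof.
move=> Pnu Pmu x_gt0 y_gt0 not_box box_mu.
have leq_conjp_mu a b : 0 < a -> 0 < b ->
    (a <= conjp mu b) = (a <= conjp nu b) || (a == x) && (b == y).
  by move=> a_gt0 b_gt0; rewrite -!is_box_conjp.
have nu_lt_x : conjp nu y < x by rewrite ltnNge -is_box_conjp.
have x_le_mu : x <= conjp mu y by rewrite leq_conjp_mu // !eqxx orbT.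
have conj_mu : conjp mu y = x.
  have := leq_conjp_mu (conjp mu y) y (leq_trans x_gt0 x_le_mu) y_gt0.
  by rewrite leqnn eqxx andbT => /esym/orP[mu_le_nu | /eqP //]; lia.
split=> // [|b b_gt0 b_neq_y].
  have [x_eq1 | x_gt1] : x = 1 \/ 1 < x by lia.
    by move: nu_lt_x; rewrite x_eq1; lia.
  have pred_gt0 : 0 < x.-1 by lia.
  by have := leq_conjp_mu _ _ pred_gt0 y_gt0; rewrite conj_mu leq_pred; lia.
by apply: eq_leq_pos => a a_gt0; rewrite leq_conjp_mu // (negbTE b_neq_y) andbF orbF.
Qed.

Lemma count_sum_nat (T : Type) (a : pred T) (r : seq T) :
  count a r = \sum_(t <- r) a t.
Proof. by rewrite -sum1_count big_mkcond. Qed.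

Lemma count_eq_andb (s : seq nat) c (q : bool) : uniq s -> (q -> c \in s) ->
  count (fun b => (b == c) && q) s = q.
Proof.
case: q => [s_uniq c_in_s | _ _].
  rewrite (eq_count (a2 := pred1 c)) => [|b]; last by rewrite andbT.
  by rewrite count_uniq_mem ?c_in_s.
by rewrite (eq_count (a2 := pred0)) ?count_pred0 // => b; rewrite andbF.
Qed.

Lemma count_iota_widen (P : pred nat) m M : m <= M ->
  (forall b, m < b -> P b = false) -> count P (iota 1 M) = count P (iota 1 m).
Proof.
move=> le_mM P_out; rewrite -(subnKC le_mM) iotaD count_cat.
rewrite (eq_in_count (a2 := pred0) (s := iota (1 + m) _)) ?count_pred0 ?addn0 //.
by move=> b; rewrite mem_iota => /andP[b_ge _]; apply: P_out; rewrite -add1n.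
Qed.

Section ColumnCounts.
Variables (n k j : nat).

Definition concave_col (g : seq nat) (b : nat) : bool :=
  ((b == 1) || (conjp g b < conjp g b.-1)) && has_color n k j (conjp g b).+1 b.

Definition convex_col (g : seq nat) (b : nat) : bool :=
  (conjp g b.+1 < conjp g b) && has_color n k j (conjp g b) b.

Lemma concave_colE g x y : 0 < y ->
  is_concave g x y && has_color n k j x y = (x == (conjp g y).+1) && concave_col g y.
Proof.
move=> y_gt0; case: x => [|x]; first by rewrite /is_concave.
rewrite /is_concave /concave_col y_gt0 /= eqSS eq_sym.
by case: eqP => [<-|].
Qed.

Lemma convex_colE g x y : 0 < y ->
  is_convex g x y && has_color n k j x y = (x == conjp g y) && convex_col g y.
Proof.
move=> y_gt0; rewrite /is_convex /convex_col y_gt0 /= eq_sym.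
case: eqP => [<-|]; last by rewrite !andbF.
by rewrite andbT; case: x => [|x]; rewrite ?ltn0.
Qed.

Lemma count_allpairs_col (P : nat -> nat -> bool) (C : pred nat) (r : nat -> nat) N :
  (forall x y, 0 < y -> P x y = (x == r y) && C y) ->
  (forall y, 0 < y -> C y -> 0 < r y <= N.+1) ->
  count (fun p => P p.1 p.2) [seq (x, y) | x <- iota 1 N.+1, y <- iota 1 N.+1] =
  count C (iota 1 N.+1).
Proof.
move=> PE r_range; rewrite count_sum_nat big_allpairs exchange_big count_sum_nat.
apply: eq_big_seq => y; rewrite mem_iota => /andP[y_gt0 _].
rewrite (eq_bigr (fun x => (x == r y) && C y : nat)) => [|x _]; last by rewrite PE.
rewrite -count_sum_nat count_eq_andb ?iota_uniq // => Cy.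
by rewrite mem_iota; have := r_range y y_gt0 Cy; lia.
Qed.

Lemma nCC_count_col g M : sumn g < M -> nCC n k j g = count (concave_col g) (iota 1 M).
Proof.
move=> lt_sumn_M; rewrite (@count_iota_widen _ (sumn g).+1) //; last first.
  move=> b lt_sumn_b; have lt_sumn_pred : sumn g < b.-1 by lia.
  rewrite /concave_col (conjp_eq0 lt_sumn_pred) (conjp_eq0 (ltnW lt_sumn_b)) /=.
  by case: b lt_sumn_b {lt_sumn_pred} => [|[|b]].
apply: (count_allpairs_col (P := fun x y => is_concave g x y && has_color n k j x y)
  (r := fun y => (conjp g y).+1)) => [x y|y y_gt0 _].
  exact: concave_colE.
by rewrite /= ltnS conjp_leq_sumn.
Qed.

Lemma nCV_count_col g M : sumn g < M -> nCV n k j g = count (convex_col g) (iota 1 M).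
Proof.
move=> lt_sumn_M; rewrite (@count_iota_widen _ (sumn g).+1) //; last first.
  by move=> b lt_sumn_b; rewrite /convex_col (conjp_eq0 (ltnW lt_sumn_b)) ltn0.
apply: (count_allpairs_col (P := fun x y => is_convex g x y && has_color n k j x y)
  (r := conjp g)) => [x y|y y_gt0 /andP[c_lt _]].
  exact: convex_colE.
by rewrite (leq_ltn_trans _ c_lt) // ltnW // ltnS conjp_leq_sumn.
Qed.
End ColumnCounts.

Lemma count_iota_window (P : pred nat) y M : 0 < y -> y < M ->
  count P (iota 1 M) = count P (iota 1 y.-2) + ((1 < y) && P y.-1) + P y + P y.+1
    + count P (iota y.+2 (M - y.+1)).
Proof.
case: y => [//|[|y]] _ lt_yM; rewrite -(subnKC lt_yM) addKn.
  by rewrite iotaD count_cat /= addn0.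
by rewrite -addn3 !iotaD !count_cat /= !add1n addn3 addn0 !addnA.
Qed.

Lemma count_iota_local (P Q : pred nat) y M : 0 < y -> y < M ->
  (forall b, 0 < b -> b != y.-1 -> b != y -> b != y.+1 -> P b = Q b) ->
  count P (iota 1 M) + ((1 < y) && Q y.-1) + Q y + Q y.+1 =
  count Q (iota 1 M) + ((1 < y) && P y.-1) + P y + P y.+1.
Proof.
move=> y_gt0 lt_yM PQ; rewrite !(count_iota_window _ y_gt0 lt_yM).
rewrite (@eq_in_count _ P Q (iota 1 _)) => [|b]; last first.
  by rewrite mem_iota => /andP[b_ge b_lt]; apply: PQ; lia.
rewrite (@eq_in_count _ P Q (iota y.+2 _)) => [|b]; last first.
  by rewrite mem_iota => /andP[b_ge b_lt]; apply: PQ; lia.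
ring.
Qed.

Lemma has_color_diag n k j a b : has_color n k j a.+1 b.+1 = has_color n k j a b.
Proof. by rewrite /has_color -addn1 -(addn1 b) !PoszD; congr (_ %% _ == _)%Z; ring. Qed.

Section AddBox.
Variables (n k j : nat) (nu mu : seq nat) (x y : nat).
Hypotheses (x_gt0 : 0 < x) (y_gt0 : 0 < y).
Hypotheses (conjp_nu_y : conjp nu y = x.-1) (conjp_mu_y : conjp mu y = x).
Hypothesis conjp_mu_nu : forall b, 0 < b -> b != y -> conjp mu b = conjp nu b.

Local Notation concave_col := (concave_col n k j).
Local Notation convex_col := (convex_col n k j).
Local Notation has_color := (has_color n k j).

Lemma conjp_nu_succ_leq : conjp nu y.+1 <= x.-1.
Proof. by rewrite -conjp_nu_y leq_conjp. Qed.

Lemma conjp_nu_pred_geq : 1 < y -> x <= conjp nu y.-1.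
Proof.
move=> y_gt1; rewrite -conjp_mu_nu -?conjp_mu_y ?leq_conjp ?leq_pred //; lia.
Qed.

Lemma concave_col_local b : 0 < b -> b != y -> b != y.+1 ->
  concave_col mu b = concave_col nu b.
Proof.
move=> b_gt0 b_neq_y b_neq_succ; rewrite /concave_col conjp_mu_nu //.
by case: eqP => //= /eqP b_neq1; rewrite conjp_mu_nu //; lia.
Qed.

Lemma convex_col_local b : 0 < b -> b != y.-1 -> b != y ->
  convex_col mu b = convex_col nu b.
Proof. by move=> b_gt0 b_neq_pred b_neq_y; rewrite /convex_col !conjp_mu_nu //; lia. Qed.

Lemma concave_col_nu_y : concave_col nu y = has_color x y.
Proof.
rewrite /concave_col conjp_nu_y prednK //; case: eqP => //= /eqP y_neq1.
by rewrite conjp_nu_pred_geq //; lia.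
Qed.

Lemma convex_col_mu_y : convex_col mu y = has_color x y.
Proof.
have d_lt : conjp nu y.+1 < x by have := conjp_nu_succ_leq; lia.
by rewrite /convex_col conjp_mu_y conjp_mu_nu ?d_lt //; lia.
Qed.

Lemma concave_col_mu_y :
  concave_col mu y + ((1 < y) && convex_col nu y.-1) =
  has_color x.+1 y + ((1 < y) && convex_col mu y.-1).
Proof.
rewrite /concave_col /convex_col conjp_mu_y.
have [y_gt1 | y_le1] := ltnP 1 y; last by have -> : y == 1 by lia.
have [pred_gt0 pred_neq_y] : 0 < y.-1 /\ y.-1 != y by lia.
rewrite (prednK y_gt0) conjp_nu_y conjp_mu_y conjp_mu_nu //=.
have -> : (y == 1) = false by lia.
have := conjp_nu_pred_geq y_gt1; rewrite leq_eqVlt => /orP[/eqP <- | x_lt] /=.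
  have -> : has_color x.+1 y = has_color x y.-1.
    by rewrite -[has_color x y.-1]has_color_diag prednK.
  by rewrite ltnn; lia.
have -> : x.-1 < conjp nu y.-1 by lia.
by rewrite x_lt addnC.
Qed.

Lemma convex_col_nu_y :
  convex_col nu y + concave_col mu y.+1 = has_color x.-1 y + concave_col nu y.+1.
Proof.
rewrite /concave_col /convex_col /= conjp_nu_y conjp_mu_y conjp_mu_nu //; last by lia.
have -> : (y.+1 == 1) = false by lia.
have := conjp_nu_succ_leq; rewrite leq_eqVlt => /orP[/eqP -> | d_lt] /=.
  have -> : x.-1 < x by lia.
  by rewrite has_color_diag ltnn /= addn0.
have -> : conjp nu y.+1 < x by lia.
by rewrite d_lt addnC.
Qed.

Lemma vk_add_box : (vk n k mu j - vk n k nu j =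
  (has_color x.+1 y)%:Z + (has_color x.-1 y)%:Z - 2 * (has_color x y)%:Z)%R.
Proof.
pose M := (sumn mu + sumn nu + y).+1.
have [lt_mu lt_nu lt_y] : [/\ sumn mu < M, sumn nu < M & y < M] by split; rewrite /M; lia.
have cc_pred : (1 < y) && concave_col mu y.-1 = (1 < y) && concave_col nu y.-1.
  by case: (ltnP 1 y) => //= y_gt1; apply: concave_col_local; lia.
have cv_succ : convex_col mu y.+1 = convex_col nu y.+1 by apply: convex_col_local; lia.
have := count_iota_local (P := concave_col mu) (Q := concave_col nu) y_gt0 lt_y
  (fun b b_gt0 _ b_neq_y b_neq_succ => concave_col_local b_gt0 b_neq_y b_neq_succ).
have := count_iota_local (P := convex_col mu) (Q := convex_col nu) y_gt0 lt_y
  (fun b b_gt0 b_neq_pred b_neq_y _ => convex_col_local b_gt0 b_neq_pred b_neq_y).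
have := concave_col_mu_y; have := convex_col_nu_y.
rewrite cc_pred cv_succ concave_col_nu_y convex_col_mu_y.
rewrite /vk (nCC_count_col n k j lt_mu) (nCC_count_col n k j lt_nu).
rewrite (nCV_count_col n k j lt_mu) (nCV_count_col n k j lt_nu).
(* Forget that the indicators are 0/1, or [lia] splits on each of them. *)
repeat match goal with |- context [nat_of_bool ?b] => move: (nat_of_bool b) => ? end.
lia.
Qed.

End AddBox.

Local Open Scope ring_scope.

Lemma has_color_row n k i j x y a : has_color n k i x y ->
  has_color n k j a y = (i%:Z == j%:Z - (a%:Z - x%:Z) %[mod n])%Z.
Proof.
rewrite /has_color => /eqP color_xy.
have -> : k%:Z + a%:Z - y%:Z = k%:Z + x%:Z - y%:Z + (a%:Z - x%:Z) by ring.
by rewrite -modzDml color_xy modzDml !eqz_mod_dvd; congr (_ %| _)%Z; ring.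
Qed.

Lemma deltanE n a b : deltan n a b = (a == b %[mod n])%Z%:Z.
Proof. by rewrite /deltan; case: ifP. Qed.

Theorem mainTheorem11 (n : nat) (hn : (3 <= n)%N) (k i : 'I_n)
    (nu mu : seq nat) (x y : nat) :
  is_partition nu -> is_partition mu ->
  (0 < x)%N -> (0 < y)%N -> ~~ is_box nu x y ->
  (forall a b : nat, is_box mu a b = is_box nu a b || ((a == x) && (b == y))) ->
  has_color n k i x y ->
  forall j : 'I_n,
    vk n k mu j - vk n k nu j = - alphabar n (i : nat)%:Z (j : nat)%:Z.
Proof.
move=> Pnu Pmu x_gt0 y_gt0 not_box box_mu color_xy j.
have [conj_nu conj_mu conj_off] := conjp_add_box Pnu Pmu x_gt0 y_gt0 not_box box_mu.
rewrite (vk_add_box n k j x_gt0 y_gt0 conj_nu conj_mu conj_off).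
rewrite !(has_color_row _ _ color_xy) /alphabar !deltanE.
have -> : x.+1%:Z - x%:Z = 1 by lia.
have -> : x.-1%:Z - x%:Z = -1 by lia.
by rewrite subrr subr0 opprK; ring.
Qed.
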